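(* Let $(\Omega,\Sigma,\mathbb P)$ be any probability space. The Banach couple $(\ell_1,\ell_2)$ is not $\mathcal K$-closed representable in the Banach couple $(L_\infty(\Omega),L_2(\Omega))$.
   Context: For a Banach couple $(X_0,X_1)$, $x\in X_0+X_1$ and $t>0$, $\mathcal K(t,x;X_0,X_1)=\inf\{\|x_0\|_{X_0}+t\|x_1\|_{X_1}: x=x_0+x_1,\ x_0\in X_0,\ x_1\in X_1\}$. A Banach couple $(X_0,X_1)$ is $\mathcal K$-closed representable in a Banach couple $(Y_0,Y_1)$ if there is a linear operator $T:X_0+X_1\to Y_0+Y_1$ which is injective and bounded from $X_0$ into $Y_0$ and from $X_1$ into $Y_1$, and a constant $C>0$ such that $C^{-1}\mathcal K(t,x;X_0,X_1)\le\mathcal K(t,Tx;Y_0,Y_1)\le C\,\mathcal K(t,x;X_0,X_1)$ for all $x\in X_0+X_1$ and $t>0$. *)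

From HB Require Import structures.
From mathcomp Require Import all_boot all_order all_algebra.
From mathcomp Require Import all_classical all_reals all_analysis.
Set Implicit Arguments. Unset Strict Implicit. Unset Printing Implicit Defensive.
Import Order.TTheory GRing.Theory Num.Theory.
Local Open Scope classical_set_scope.
Local Open Scope ring_scope.

Section Couples.
Context {R : realType}.
Local Open Scope ereal_scope.

Definition lnorm (p : \bar R) (x : nat -> R) : \bar R :=
  'N[counting]_p[EFin \o x].

Definition l1_plus_l2 : set (nat -> R) :=
  [set x | exists x0 : nat -> R,
     lnorm 1 x0 < +oo /\ lnorm 2%:E (fun n => (x n - x0 n)%R) < +oo].

Definition K_l1l2 (t : R) (x : nat -> R) : \bar R :=
  ereal_inf [set lnorm 1 x0 + t%:E * lnorm 2%:E (fun n => (x n - x0 n)%R)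
            | x0 in [set: nat -> R]].

Context {d : measure_display} {Omega : measurableType d}.
Variable P : probability Omega R.

Definition Linf_norm (f : Omega -> R) : \bar R := 'N[P]_+oo[EFin \o f].
Definition L2_norm (f : Omega -> R) : \bar R := 'N[P]_2%:E[EFin \o f].

(** the sum space L_oo + L_2 (elements are measurable functions; they are
    identified up to P-a.e. equality wherever it matters below) *)
Definition Linf_plus_L2 : set (Omega -> R) :=
  [set f : Omega -> R | measurable_fun [set: Omega] f /\
     exists g0 : Omega -> R, measurable_fun [set: Omega] g0 /\
       Linf_norm g0 < +oo /\ L2_norm (fun w => (f w - g0 w)%R) < +oo].

Definition K_LinfL2 (t : R) (f : Omega -> R) : \bar R :=
  ereal_inf [set Linf_norm g0 + t%:E * L2_norm (fun w => (f w - g0 w)%R)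
            | g0 in [set g : Omega -> R | measurable_fun [set: Omega] g]].

(** The operator T acts on l_1 + l_2 and takes values in L_oo + L_2, whose
    elements are classes modulo P-a.e. equality: linearity and injectivity
    are therefore understood modulo P-a.e. equality. *)
Definition K_closed_representable_l1l2_LinfL2 : Prop :=
  exists T : (nat -> R) -> (Omega -> R),
    (forall x, l1_plus_l2 x -> Linf_plus_L2 (T x)) /\
    (forall x y (a b : R), l1_plus_l2 x -> l1_plus_l2 y ->
       T (fun n => a * x n + b * y n)%R = (fun w => a * T x w + b * T y w)%R
         %[ae P]) /\
    (forall x y, l1_plus_l2 x -> l1_plus_l2 y ->
       T x = T y %[ae P] -> x = y) /\
    (exists C : R, (0 < C)%R /\ forall x, lnorm 1 x < +oo ->
       Linf_norm (T x) <= C%:E * lnorm 1 x) /\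
    (exists C : R, (0 < C)%R /\ forall x, lnorm 2%:E x < +oo ->
       L2_norm (T x) <= C%:E * lnorm 2%:E x) /\
    (exists C : R, (0 < C)%R /\ forall x (t : R), l1_plus_l2 x -> (0 < t)%R ->
       C^-1%:E * K_l1l2 t x <= K_LinfL2 t (T x) /\
       K_LinfL2 t (T x) <= C%:E * K_l1l2 t x).

End Couples.

From HB Require Import structures.
From mathcomp Require Import all_boot all_order all_algebra.
From mathcomp Require Import all_classical all_reals all_analysis.
From mathcomp Require Import ring lra ess_sup_inf measurable_realfun.
Set Implicit Arguments. Unset Strict Implicit. Unset Printing Implicit Defensive.
Import Order.TTheory GRing.Theory Num.Theory.
Local Open Scope classical_set_scope.
Local Open Scope ring_scope.

(* Suppose T represents (l_1, l_2) in (L_oo, L_2) with constant C.  The images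
   T e_k of the unit vectors are bounded by some C1 in L_oo.  Choosing signs
   greedily (at each step the better of the two signs, as in a derandomized
   Khintchine inequality), the fourth moments of T (e_0 +- ... +- e_(k-1)) grow
   at most like 10 C1^4 k^2.  For n = m^2 the sign vector x of length n has
   K(m, x; l_1, l_2) >= n, whereas truncating T x at height M = n / (2 C)
   leaves a remainder whose L_2 norm is at most ||T x||_4^2 / M = O(C), so
   K(m, T x; L_oo, L_2) <= n / (2 C) + O(m C).  Comparing with
   K(m, T x) >= n / C gives m = O(C^2), which fails for m large. *)

Definition clamp {R : realDomainType} (M a : R) : R := Num.max (- M) (Num.min M a).

Section RealInequalities.
Variable R : realFieldType.

Lemma clamp_id (M a : R) : `|a| <= M -> clamp M a = a.
Proof.
rewrite ler_norml => /andP[Ma aM].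
by rewrite /clamp (min_r aM) (max_r Ma).
Qed.

Lemma norm_clamp_le (M a : R) : 0 <= M -> `|clamp M a| <= M.
Proof.
move=> M0; rewrite /clamp.
case: (lerP a M) => aM; case: (lerP (- M) a) => Ma; rewrite ?ler_norml; try lra.
by rewrite (max_r (_ : - M <= M)); lra.
Qed.

Lemma sqr_sub_clamp_le (M a : R) : 0 < M -> (a - clamp M a) ^+ 2 * M ^+ 2 <= a ^+ 4.
Proof.
move=> M0; rewrite (_ : a ^+ 4 = a ^+ 2 * a ^+ 2); last by rewrite -exprD.
rewrite /clamp.
case: (lerP a M) => aM; case: (lerP (- M) a) => Ma; try nra.
- by apply: ler_pM; rewrite ?sqr_ge0 //; nra.
- rewrite (max_r (_ : - M <= M)); last lra.
  by apply: ler_pM; rewrite ?sqr_ge0 //; nra.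
Qed.

Lemma exprD4_add_exprB4_le (a b c m : R) : 0 < m -> `|b| <= c ->
  (a + b) ^+ 4 + (a - b) ^+ 4 <= 2 * (1 + m^-1) * a ^+ 4 + 2 * (9 * m + 1) * c ^+ 4.
Proof.
move=> m0 bc.
have b2c : b ^+ 2 <= c ^+ 2 by move: bc; rewrite ler_norml => /andP[? ?]; nra.
have b4c : b ^+ 4 <= c ^+ 4.
  rewrite (_ : 4 = 2 * 2)%N // !exprM.
  by rewrite ler_pXn2r // nnegrE sqr_ge0.
(* AM-GM: [12 a^2 b^2 <= 2 a^4 / m + 18 m b^4] *)
have amgm : 12 * a ^+ 2 * b ^+ 2 <= 2 * m^-1 * a ^+ 4 + 18 * m * b ^+ 4.
  have -> : 2 * m^-1 * a ^+ 4 + 18 * m * b ^+ 4 =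
            12 * a ^+ 2 * b ^+ 2 + 2 * m^-1 * (a ^+ 2 - 3 * m * b ^+ 2) ^+ 2.
    by field; rewrite gt_eqF.
  by rewrite lerDl mulr_ge0 ?sqr_ge0 // mulr_ge0 // invr_ge0 ltW.
have -> : (a + b) ^+ 4 + (a - b) ^+ 4 =
          2 * a ^+ 4 + 12 * a ^+ 2 * b ^+ 2 + 2 * b ^+ 4 by ring.
have mb : m * b ^+ 4 <= m * c ^+ 4 by rewrite ler_pM2l.
have -> : 2 * (1 + m^-1) * a ^+ 4 + 2 * (9 * m + 1) * c ^+ 4 =
          2 * a ^+ 4 + 2 * m^-1 * a ^+ 4 + 18 * (m * c ^+ 4) + 2 * c ^+ 4 by ring.
lra.
Qed.

Lemma sqr_sum_le (u : nat -> R) n :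
  (\sum_(j < n) u j) ^+ 2 <= n%:R * \sum_(j < n) u j ^+ 2.
Proof.
elim: n => [|n IH]; first by rewrite !big_ord0 mul0r expr0n.
case: (posnP n) => [->|n_gt0]; first by rewrite !big_ord1 mul1r.
rewrite !big_ord_recr /=.
set S := \sum_(j < n) u j in IH *; set Q := \sum_(j < n) u j ^+ 2 in IH *.
have Q0 : 0 <= Q by apply: sumr_ge0 => i _; apply: sqr_ge0.
have cross : 2 * S * u n <= Q + n%:R * u n ^+ 2.
  rewrite -(ler_pM2l (_ : 0 < n%:R)) ?ltr0n //.
  have : 0 <= (S - n%:R * u n) ^+ 2 by apply: sqr_ge0.
  nra.
rewrite mulrSr; nra.
Qed.

(* The bound [10 D k^2] on fourth moments survives one greedy step. *)
Lemma moment4_step_le (D K : R) : 0 <= D -> 0 <= K ->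
  (1 + (K + 1)^-1) * (10 * D * K ^+ 2) + (9 * (K + 1) + 1) * D <=
  10 * D * (K + 1) ^+ 2.
Proof.
move=> D0 K0.
have K2 : (K + 1)^-1 * K ^+ 2 <= K.
  have -> : (K + 1)^-1 * K ^+ 2 = K - K * (K + 1)^-1 by field; lra.
  by rewrite lerBlDr lerDl mulr_ge0 // invr_ge0; lra.
have DK2 : D * ((K + 1)^-1 * K ^+ 2) <= D * K by rewrite ler_wpM2l.
have -> : (1 + (K + 1)^-1) * (10 * D * K ^+ 2) =
          10 * D * K ^+ 2 + 10 * (D * ((K + 1)^-1 * K ^+ 2)) by ring.
have DK : 0 <= D * K by rewrite mulr_ge0.
nra.
Qed.

Lemma le_of_sqr_le_half_add (C m r : R) : 0 < C -> 0 < m ->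
  C^-1 * m ^+ 2 <= m ^+ 2 / (2 * C) + m * r -> m <= 2 * C * r.
Proof.
move=> C_gt0 m_gt0; rewrite -(ler_pM2l (_ : 0 < 2 * C)) ?mulr_gt0 // mulrDr.
have -> : 2 * C * (C^-1 * m ^+ 2) = 2 * m ^+ 2 by field; rewrite gt_eqF.
have -> : 2 * C * (m ^+ 2 / (2 * C)) = m ^+ 2 by field; rewrite gt_eqF.
rewrite expr2 => h; rewrite -(ler_pM2l m_gt0); nra.
Qed.

End RealInequalities.

Section SequenceSpaces.
Variable R : realType.
Local Open Scope ereal_scope.

Definition unit_seq (k : nat) : nat -> R := fun j => ((j == k)%:R)%R.

Definition prefix_seq (eps : nat -> R) (k : nat) : nat -> R :=
  fun j => if (j < k)%N then eps j else 0%R.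

Lemma lnorm1_series (x : nat -> R) : lnorm 1 x = \sum_(k <oo) (`|x k|)%:E.
Proof. by rewrite /lnorm Lnorm1 ge0_integral_count. Qed.

Lemma lnorm2_series (x : nat -> R) :
  lnorm 2%:E x = (\sum_(k <oo) ((x k) ^+ 2)%:E) `^ 2^-1.
Proof.
rewrite /lnorm Lnorm_counting //; congr (_ `^ _).
by apply: eq_eseriesr => k _ /=; rewrite powR_mulrn // real_normK // num_real.
Qed.

Lemma lnorm1_finsupp (x : nat -> R) N : (forall j, (N <= j)%N -> x j = 0%R) ->
  lnorm 1 x = (\sum_(j < N) `|x j|)%:E.
Proof.
move=> x0; rewrite lnorm1_series (nneseries_split 0 N) // add0n.
rewrite eseries0; last by move=> i Ni _; rewrite x0 // normr0.
by rewrite adde0 big_mkord sumEFin.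
Qed.

Lemma lnorm1_ge_partial (x : nat -> R) N : (\sum_(j < N) `|x j|)%:E <= lnorm 1 x.
Proof.
rewrite lnorm1_series -sumEFin -(big_mkord xpredT (fun j => (`|x j|)%:E)).
exact: nneseries_lim_ge.
Qed.

Lemma poweR_half_EFin_sqr (r : R) : (0 <= r)%R -> (r ^+ 2)%:E `^ 2^-1 = r%:E.
Proof.
by move=> r0; rewrite poweR_EFin powR12_sqrt ?sqr_ge0 // sqrtr_sqr ger0_norm.
Qed.

Lemma lnorm2_ge_partial (x : nat -> R) N (r : R) : (0 <= r)%R ->
  (r ^+ 2 <= \sum_(j < N) x j ^+ 2)%R -> r%:E <= lnorm 2%:E x.
Proof.
move=> r0 rN; rewrite lnorm2_series -poweR_half_EFin_sqr //.
have series_ge0 : 0 <= \sum_(k <oo) ((x k) ^+ 2)%:E.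
  by apply: nneseries_ge0 => n _ _; rewrite lee_fin sqr_ge0.
apply: gt0_ler_poweR; rewrite ?in_itv /= ?lee_fin ?sqr_ge0 ?leey ?series_ge0 //.
apply: le_trans (_ : (\sum_(j < N) x j ^+ 2)%:E <= _); first by rewrite lee_fin.
rewrite -sumEFin -(big_mkord xpredT (fun j => ((x j) ^+ 2)%:E)).
by apply: nneseries_lim_ge => n _ _; rewrite lee_fin sqr_ge0.
Qed.

Lemma lnorm2_0 : lnorm 2%:E (fun _ : nat => 0%R : R) = 0.
Proof. by rewrite /lnorm (@eq_Lnorm _ _ R counting _ _ (cst 0%:E)) ?Lnorm0. Qed.

Lemma finsupp_l1_plus_l2 (x : nat -> R) N : (forall j, (N <= j)%N -> x j = 0%R) ->
  l1_plus_l2 x.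
Proof.
move=> x0; exists x; split; first by rewrite (lnorm1_finsupp x0) ltry.
rewrite (_ : (fun n => x n - x n)%R = fun _ => 0%R) ?lnorm2_0 ?ltry //.
by apply/funext => n; rewrite subrr.
Qed.

Lemma unit_seq_finsupp k j : (k < j)%N -> unit_seq k j = 0%R.
Proof. by rewrite /unit_seq; case: eqP => // ->; rewrite ltnn. Qed.

Lemma prefix_seq_finsupp (eps : nat -> R) k j : (k <= j)%N -> prefix_seq eps k j = 0%R.
Proof. by rewrite /prefix_seq ltnNge => ->. Qed.

Lemma lnorm1_unit_seq k : lnorm 1 (unit_seq k) = 1.
Proof.
rewrite (@lnorm1_finsupp _ k.+1 (@unit_seq_finsupp k)) big_ord_recr /=.
rewrite big1 /unit_seq ?eqxx ?normr1 ?add0r // => i _.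
by rewrite (_ : (i == k :> nat) = false) ?normr0 // ltn_eqF.
Qed.

Lemma prefix_seq_extend (eps : nat -> R) (s : R) k :
  prefix_seq (fun j => if j == k then s else eps j) k.+1 =
  (fun j => 1 * prefix_seq eps k j + s * unit_seq k j)%R.
Proof.
apply/funext => j; rewrite /prefix_seq /unit_seq ltnS mul1r.
by case: ltngtP; rewrite /= ?eqxx ?mulr0 ?mulr1 ?addr0 ?add0r.
Qed.

(* Writing x = x0 + y, each coordinate gives [1 <= |x0 j| + |y j|], and
   Cauchy-Schwarz gives [sum_j |y j| <= sqrt n ||y||_2 <= t ||y||_2]. *)
Lemma K_l1l2_prefix_ge (eps : nat -> R) (n : nat) (t : R) :
  (forall j, `|eps j|%R = 1%R) -> (0 <= t)%R -> (n%:R <= t ^+ 2)%R ->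
  n%:R%:E <= K_l1l2 t (prefix_seq eps n).
Proof.
move=> eps1 t0 nt; apply: le_ereal_inf_tmp => _ [x0 _ <-].
set y := (fun j => prefix_seq eps n j - x0 j)%R.
set a := (\sum_(j < n) `|x0 j|)%R; set s := (\sum_(j < n) `|y j|)%R.
set Q := (\sum_(j < n) y j ^+ 2)%R.
have Q0 : (0 <= Q)%R by apply: sumr_ge0 => i _; apply: sqr_ge0.
have b0 : (0 <= Num.sqrt Q)%R by apply: sqrtr_ge0.
apply: (@le_trans _ _ (a + t * Num.sqrt Q)%:E); last first.
  rewrite EFinD EFinM; apply: leeD; first exact: lnorm1_ge_partial.
  by apply: lee_wpmul2l; rewrite ?lee_fin // (@lnorm2_ge_partial _ n) // sqr_sqrtr.
have as_ge : (n%:R <= a + s)%R.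
  rewrite -[n in n%:R]card_ord -sumr_const -big_split; apply: ler_sum => i _.
  rewrite /y /prefix_seq ltn_ord; have := lerB_dist (eps i) (x0 i); rewrite eps1 /=; lra.
have s_le : (s <= t * Num.sqrt Q)%R.
  rewrite -(ler_pXn2r (_ : 0 < 2)%N) ?nnegrE ?sumr_ge0 ?mulr_ge0 //.
  rewrite /s; apply: le_trans (sqr_sum_le (fun j => `|y j|%R) n) _.
  rewrite exprMn sqr_sqrtr //.
  rewrite (_ : \sum_(j < n) `|y j| ^+ 2 = Q)%R; first by rewrite ler_wpM2r.
  by apply: eq_bigr => i _; rewrite real_normK ?num_real.
by rewrite lee_fin; lra.
Qed.

End SequenceSpaces.

Lemma measurable_clamp (d : measure_display) (T : measurableType d) (R : realType)
    (M : R) (f : T -> R) :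
  measurable_fun setT f -> measurable_fun setT (fun w => clamp M (f w)).
Proof.
move=> mf; apply: (measurable_maxr (measurable_cst _)).
exact: (measurable_minr (measurable_cst _) mf).
Qed.

Lemma lee_double (R : realDomainType) (x y : \bar R) : (0 <= x)%E ->
  (x + x <= y + y)%E -> (x <= y)%E.
Proof.
move=> x0; case: y => [r||] xy; last 2 first.
- exact: leey.
- by case: x x0 xy => [s||].
by case: x x0 xy => [s||] //=; rewrite -!EFinD !lee_fin => ? ?; lra.
Qed.

Section ProbabilitySide.
Context (R : realType) (d : measure_display) (Omega : measurableType d).
Variable P : probability Omega R.
Local Open Scope ereal_scope.

Lemma Linf_norm_le (h : Omega -> R) (M : R) :
  (forall w, `|h w| <= M)%R -> Linf_norm P h <= M%:E.
Proof.
move=> hM; rewrite /Linf_norm unlock /= probability_setT lte01.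
by apply/ess_supP; apply: nearW => w /=; rewrite lee_fin.
Qed.

Lemma Linf_norm_le_ae (h : Omega -> R) (M : R) :
  Linf_norm P h <= M%:E -> {ae P, forall w, `|h w| <= M}%R.
Proof.
rewrite /Linf_norm unlock /= probability_setT lte01 => /ess_supP.
by apply: filterS => w /=; rewrite lee_fin.
Qed.

Lemma L2_norm_le (h : Omega -> R) (r : R) : (0 <= r)%R ->
  \int[P]_w ((h w) ^+ 2)%:E <= (r ^+ 2)%:E -> L2_norm P h <= r%:E.
Proof.
move=> r0 hr; rewrite /L2_norm unlock /= -poweR_half_EFin_sqr //.
have -> : \int[P]_w (`|(EFin \o h) w| `^ 2) = \int[P]_w ((h w) ^+ 2)%:E.
  by apply: eq_integral => w _ /=; rewrite powR_mulrn // real_normK // num_real.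
apply: gt0_ler_poweR; rewrite ?in_itv /= ?lee_fin ?sqr_ge0 ?leey ?andbT //.
by apply: integral_ge0 => w _; rewrite lee_fin sqr_ge0.
Qed.

Lemma measurable_EFin_expr (h : Omega -> R) n : measurable_fun setT h ->
  measurable_fun setT (fun w => ((h w) ^+ n)%:E).
Proof. by move=> mh; apply/measurable_EFinP; exact: measurable_funX. Qed.

(* Adding [+- g] to [F]: the sum of the two fourth moments is controlled by
   [exprD4_add_exprB4_le], so the smaller of the two is at most half of it. *)
Lemma exists_sign_moment4_le (F g : Omega -> R) (c m : R) :
  measurable_fun setT F -> measurable_fun setT g -> (0 < m)%R ->
  (forall w, `|g w| <= c)%R ->
  exists s : R, `|s|%R = 1%R /\
   \int[P]_w ((F w + s * g w) ^+ 4)%:E <=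
   (1 + m^-1)%:E * \int[P]_w ((F w) ^+ 4)%:E + ((9 * m + 1) * c ^+ 4)%:E.
Proof.
move=> mF mg m0 gc.
set I := \int[P]_w ((F w) ^+ 4)%:E.
set a := \int[P]_w ((F w + g w) ^+ 4)%:E.
set b := \int[P]_w ((F w - g w) ^+ 4)%:E.
set X := (1 + m^-1)%:E * I + ((9 * m + 1) * c ^+ 4)%:E.
have c0 : (0 <= c)%R by apply: le_trans (gc point).
have a0 : 0 <= a by apply: integral_ge0 => w _; rewrite lee_fin exprn_even_ge0.
have b0 : 0 <= b by apply: integral_ge0 => w _; rewrite lee_fin exprn_even_ge0.
have k0 : (0 <= 2 * (1 + m^-1))%R by rewrite mulr_ge0 // addr_ge0 // invr_ge0 ltW.
have k1 : (0 <= 2 * (9 * m + 1) * c ^+ 4)%R.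
  by rewrite !mulr_ge0 ?exprn_ge0 // addr_ge0 // mulr_ge0 // ltW.
have XX : X + X = \int[P]_w ((2 * (1 + m^-1))%:E * ((F w) ^+ 4)%:E +
                             (2 * (9 * m + 1) * c ^+ 4)%:E).
  have F4_ge0 w : [set: Omega] w -> 0 <= (2 * (1 + m^-1))%:E * ((F w) ^+ 4)%:E.
    by move=> _; rewrite mule_ge0 // lee_fin ?exprn_even_ge0.
  have mF4 : measurable_fun setT (fun w => (2 * (1 + m^-1))%:E * ((F w) ^+ 4)%:E).
    by apply: emeasurable_funM => //; exact: measurable_EFin_expr.
  have c4_ge0 (w : Omega) : [set: Omega] w -> 0 <= (2 * (9 * m + 1) * c ^+ 4)%:E.
    by rewrite lee_fin.
  rewrite (ge0_integralD _ measurableT F4_ge0 mF4 c4_ge0 (measurable_cst _)).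
  rewrite ge0_integralZl_EFin //; last 2 first.
  - by move=> w _; rewrite lee_fin exprn_even_ge0.
  - exact: measurable_EFin_expr.
  rewrite integral_cst // [X in _ + _ * X]probability_setT mule1.
  rewrite /X addeACA -ge0_muleDl ?lee_fin ?addr_ge0 // ?invr_ge0 ?ltW //.
  by rewrite -EFinD; congr (_ * _ + _)%E; congr (_%:E); ring.
have ab : a + b <= X + X.
  rewrite XX /a /b -ge0_integralD //; try by move=> w _; rewrite lee_fin exprn_even_ge0.
  2: exact/measurable_EFin_expr/measurable_funD.
  2: exact/measurable_EFin_expr/measurable_funB.
  apply: ge0_le_integral => //.
  - by move=> w _; rewrite lee_fin addr_ge0 // exprn_even_ge0.
  - by apply/measurable_EFinP; apply: measurable_funD; apply: measurable_funX;
      [exact: measurable_funD | exact: measurable_funB].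
  - by apply: emeasurable_funD => //; apply: emeasurable_funM => //;
      exact: measurable_EFin_expr.
  - by move=> w _; rewrite /= -EFinM -EFinD lee_fin; exact: exprD4_add_exprB4_le.
case: (leP a b) => [le_ab|lt_ba].
- exists 1%R; split; first by rewrite normr1.
  under eq_integral do rewrite mul1r.
  by apply: lee_double a0 (le_trans _ ab); exact: leeD.
- exists (-1)%R; split; first by rewrite normrN1.
  under eq_integral do rewrite mulN1r.
  by apply: lee_double b0 (le_trans _ ab); rewrite addeC; apply: leeD => //; exact: ltW.
Qed.

(* Truncate at height [M]: the remainder is pointwise at most [G^2 / M]. *)
Lemma K_LinfL2_le_moment4 (f G : Omega -> R) (t M r : R) :
  measurable_fun setT f -> measurable_fun setT G -> f = G %[ae P] ->
  (0 <= t)%R -> (0 < M)%R -> (0 <= r)%R ->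
  \int[P]_w ((G w) ^+ 4)%:E <= ((r * M) ^+ 2)%:E ->
  K_LinfL2 P t f <= (M + t * r)%:E.
Proof.
move=> mf mG fG t0 M0 r0 IG.
pose g0 w := clamp M (G w).
have M2_gt0 : (0 < M ^+ 2)%R by rewrite exprn_gt0.
have L2_g0 : L2_norm P (fun w => f w - g0 w)%R <= r%:E.
  apply: L2_norm_le => //.
  apply: (@le_trans _ _ (\int[P]_w ((M ^+ 2)^-1 * (G w) ^+ 4)%:E)).
    apply: ae_ge0_le_integral => //.
    - by move=> w _; rewrite lee_fin sqr_ge0.
    - by apply/measurable_EFin_expr/measurable_funB => //; exact: measurable_clamp.
    - by move=> w _; rewrite lee_fin mulr_ge0 ?invr_ge0 ?exprn_even_ge0 // ltW.
    - by apply/measurable_EFinP/measurable_funM => //; exact: measurable_funX.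
    - apply: filterS fG => w fw _; rewrite fw // lee_fin mulrC ler_pdivlMr //.
      exact: sqr_sub_clamp_le.
  under eq_integral do rewrite EFinM.
  rewrite ge0_integralZl_EFin //; last 3 first.
  - by move=> w _; rewrite lee_fin exprn_even_ge0.
  - exact: measurable_EFin_expr.
  - by rewrite invr_ge0 ltW.
  apply: (@le_trans _ _ ((M ^+ 2)^-1%:E * ((r * M) ^+ 2)%:E)).
    by rewrite lee_wpmul2l // lee_fin invr_ge0 ltW.
  by rewrite -EFinM lee_fin exprMn mulrC mulfK // gt_eqF.
apply: ge_ereal_inf; exists (Linf_norm P g0 + t%:E * L2_norm P (fun w => f w - g0 w)%R).
  by exists g0 => //; exact: measurable_clamp.
rewrite EFinD EFinM; apply: leeD.
  by apply: Linf_norm_le => w; apply/norm_clamp_le/ltW.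
by apply: lee_wpmul2l; rewrite ?lee_fin.
Qed.

End ProbabilitySide.

Section GreedySigns.
Context (R : realType) (d : measure_display) (Omega : measurableType d).
Variable P : probability Omega R.
Variable T : (nat -> R) -> Omega -> R.
Hypothesis measurable_T : forall x, l1_plus_l2 x -> measurable_fun setT (T x).
Hypothesis linear_T : forall x y (a b : R), l1_plus_l2 x -> l1_plus_l2 y ->
  T (fun n => a * x n + b * y n) = (fun w => a * T x w + b * T y w) %[ae P].
Variable C1 : R.
Hypothesis C1_ge0 : 0 <= C1.
Hypothesis Linf_norm_T_unit_seq : forall k, (Linf_norm P (T (unit_seq R k)) <= C1%:E)%E.

Let unit_l1l2 k : l1_plus_l2 (unit_seq R k) := finsupp_l1_plus_l2 (@unit_seq_finsupp R k).
Let prefix_l1l2 eps k : l1_plus_l2 (prefix_seq eps k) :=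
  finsupp_l1_plus_l2 (@prefix_seq_finsupp R eps k).

Lemma T_unit_seq_clamp k :
  T (unit_seq R k) = (fun w => clamp C1 (T (unit_seq R k) w)) %[ae P].
Proof.
apply: filterS (Linf_norm_le_ae (Linf_norm_T_unit_seq k)) => w Tw _.
by rewrite clamp_id.
Qed.

Lemma T_prefix_seq0 eps : T (prefix_seq eps 0) = (fun _ => 0) %[ae P].
Proof.
have l0 := prefix_l1l2 eps 0.
have := linear_T 0 0 l0 l0.
rewrite (_ : (fun n => 0 * _ + 0 * _) = prefix_seq eps 0); last first.
  by apply/funext => n; rewrite !mul0r addr0.
by apply: filterS => w h /h ->; rewrite !mul0r addr0.
Qed.

Lemma exists_signs_moment4_le k :
  exists eps : nat -> R, (forall j, `|eps j| = 1) /\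
  exists G : Omega -> R, [/\ measurable_fun setT G, T (prefix_seq eps k) = G %[ae P] &
    (\int[P]_w ((G w) ^+ 4)%:E <= (10 * C1 ^+ 4 * k%:R ^+ 2)%:E)%E].
Proof.
elim: k => [|k [eps [eps1 [G [mG TG IG]]]]].
  exists (fun _ => 1); split=> [j|]; first exact: normr1.
  exists (fun _ => 0); split; [exact: measurable_cst | exact: T_prefix_seq0 |].
  by under eq_integral do rewrite expr0n /=; rewrite integral0 expr0n /= mulr0.
set f := fun w => clamp C1 (T (unit_seq R k) w).
have mf : measurable_fun setT f by apply/measurable_clamp/measurable_T.
have [s [s1 Is]] :=
  exists_sign_moment4_le P mG mf (ltr0Sn R k) (fun w => norm_clamp_le _ C1_ge0).
exists (fun j => if j == k then s else eps j); split.
  by move=> j; case: eqP.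
exists (fun w => G w + s * f w); split.
- by apply: measurable_funD => //; apply: measurable_funM => //; exact: measurable_cst.
- rewrite prefix_seq_extend.
  move: (linear_T 1 s (prefix_l1l2 eps k) (unit_l1l2 k)) TG (T_unit_seq_clamp k).
  by apply: filterS3 => w -> // -> // -> //; rewrite mul1r.
- apply: le_trans Is _; rewrite -natr1.
  apply: (@le_trans _ _ ((1 + (k%:R + 1)^-1) * (10 * C1 ^+ 4 * k%:R ^+ 2) +
                         (9 * (k%:R + 1) + 1) * C1 ^+ 4)%:E).
    by rewrite [leRHS]EFinD [X in (_ <= X + _)%E]EFinM leeD2r // lee_wpmul2l.
  by rewrite lee_fin moment4_step_le // exprn_ge0.
Qed.

Lemma exists_signs_K_LinfL2_le (n : nat) (C t : R) : (0 < n)%N -> 0 < C -> 0 <= t ->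
  exists eps : nat -> R, (forall j, `|eps j| = 1) /\
  (K_LinfL2 P t (T (prefix_seq eps n)) <=
   (n%:R / (2 * C) + t * (2 * C * (10 * C1 ^+ 4 + 1)))%:E)%E.
Proof.
move=> n_gt0 C_gt0 t0.
have [eps [eps1 [G [mG TG IG]]]] := exists_signs_moment4_le n.
exists eps; split=> //.
set A := 10 * C1 ^+ 4; set r := 2 * C * (A + 1); set M := n%:R / (2 * C).
have A_ge0 : 0 <= A by rewrite mulr_ge0 ?exprn_ge0.
have M_gt0 : 0 < M by rewrite divr_gt0 ?ltr0n ?mulr_gt0.
have r_ge0 : 0 <= r by rewrite /r !mulr_ge0 ?addr_ge0 // ltW.
have rM : r * M = (A + 1) * n%:R by rewrite /r /M; field; rewrite gt_eqF.
apply: (K_LinfL2_le_moment4 (measurable_T (prefix_l1l2 eps n)) mG TG t0 M_gt0 r_ge0).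
apply: (le_trans IG); rewrite lee_fin -/A rM exprMn ler_wpM2r ?exprn_ge0 //; nra.
Qed.

End GreedySigns.

Theorem theorem5p1 (R : realType) (d : measure_display) (Omega : measurableType d)
  (P : probability Omega R) :
  ~ K_closed_representable_l1l2_LinfL2 P.
Proof.
move=> [T [memT [linT [_ [[C1 [C1_gt0 normT1]] [_ [C [C_gt0 KT]]]]]]]].
have T_unit k : (Linf_norm P (T (unit_seq R k)) <= C1%:E)%E.
  by move: (normT1 (unit_seq R k)); rewrite lnorm1_unit_seq mule1; apply; rewrite ltry.
pose r := 2 * C * (10 * C1 ^+ 4 + 1).
pose m := (Num.bound (2 * C * r)).+1.
have m_gt : 2 * C * r < m%:R.
  apply: lt_le_trans (archi_boundP _) _; last by rewrite ler_nat.
  by rewrite !mulr_ge0 ?addr_ge0 ?mulr_ge0 ?exprn_ge0 ?ltW.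
have [eps [eps1 K_le]] := exists_signs_K_LinfL2_le (fun x lx => (memT x lx).1) linT
  (ltW C1_gt0) T_unit (muln_gt0 m m) C_gt0 (ler0n _ m).
have n_eq : (m * m)%:R = m%:R ^+ 2 :> R by rewrite natrM expr2.
have K_ge : ((m * m)%:R%:E <= K_l1l2 m%:R (prefix_seq eps (m * m)))%E.
  by apply: K_l1l2_prefix_ge; rewrite ?n_eq.
have lx := finsupp_l1_plus_l2 (@prefix_seq_finsupp R eps (m * m)).
have [KT1 _] := KT _ m%:R lx (ltr0Sn _ _).
have : ((C^-1 * (m * m)%:R)%:E <= ((m * m)%:R / (2 * C) + m%:R * r)%:E)%E.
  rewrite EFinM; apply: (le_trans _ K_le); apply: (le_trans _ KT1).
  by apply: lee_wpmul2l K_ge; rewrite lee_fin invr_ge0 ltW.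
rewrite lee_fin n_eq => /(le_of_sqr_le_half_add C_gt0 (ltr0Sn _ _)).
by rewrite leNgt m_gt.
Qed.
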